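(* Let $\lambda\geqslant 1$ be a cardinal and $n$ a positive integer. Then the semigroup $\mathscr{I}_\lambda^n$ is algebraically $h$-closed in the class of (Hausdorff) topological inverse semigroups. Explicitly: for every (Hausdorff) topological inverse semigroup $S$ and every homomorphism $h\colon \mathscr{I}_\lambda^n\to S$, the image $(\mathscr{I}_\lambda^n)h$ is a closed subset of $S$.
   Context: All topological spaces are Hausdorff. A topological (inverse) semigroup is a topological space with a continuous semigroup operation (and, for inverse semigroups, continuous inversion $a\mapsto a^{-1}$, where $a^{-1}$ is the unique element with $aa^{-1}a=a$, $a^{-1}aa^{-1}=a^{-1}$). For a set $X$ of cardinality $\lambda$, $\mathscr{I}(X)$ is the symmetric inverse semigroup of all partial one-to-one maps of $X$ (including the empty map) under composition $x(\alpha\beta)=(x\alpha)\beta$ on $\operatorname{dom}(\alpha\beta)=\{y\in\operatorname{dom}\alpha: y\alpha\in\operatorname{dom}\beta\}$; the rank of $\alpha$ is $|\operatorname{ran}\alpha|$, and $\mathscr{I}_\lambda^n=\{\alpha\in\mathscr{I}(X): \operatorname{rank}\alpha\leqslant n\}$. Given a class $\mathfrak{S}$ of topological semigroups: $S\in\mathfrak{S}$ is $H$-closed in $\mathfrak{S}$ if $S$ is closed in every $T\in\mathfrak{S}$ containing $S$ as a (topological) subsemigroup; $S\in\mathfrak{S}$ is absolutely $H$-closed in $\mathfrak{S}$ if every continuous homomorphic image of $S$ in any $T\in\mathfrak{S}$ (with the subspace topology) is $H$-closed in $\mathfrak{S}$; a semigroup $S$ is algebraically $h$-closed in $\mathfrak{S}$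 if $S$ with the discrete topology belongs to $\mathfrak{S}$ and is absolutely $H$-closed in $\mathfrak{S}$. *)

From Stdlib Require Import List.
Import ListNotations.

Definition is_topology {X : Type} (open : (X -> Prop) -> Prop) : Prop :=
  open (fun _ => True) /\
  (forall U V, open U -> open V -> open (fun x => U x /\ V x)) /\
  (forall F : (X -> Prop) -> Prop,
      (forall U, F U -> open U) -> open (fun x => exists U, F U /\ U x)).

Definition hausdorff {X : Type} (open : (X -> Prop) -> Prop) : Prop :=
  forall x y : X, x <> y ->
    exists U V, open U /\ open V /\ U x /\ V y /\
                (forall z, U z -> V z -> False).

Definition closed_set {X : Type} (open : (X -> Prop) -> Prop) (A : X -> Prop) : Prop :=
  open (fun x => ~ A x).

Definition continuous1 {X : Type} (open : (X -> Prop) -> Prop) (f : X -> X) : Prop :=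
  forall U, open U -> open (fun x => U (f x)).

(* continuity of a binary map X x X -> X, X x X carrying the product
   topology: at every point (a,b), every open neighbourhood of f a b contains
   the image of a basic open box V x W around (a,b). *)
Definition continuous2 {X : Type} (open : (X -> Prop) -> Prop) (f : X -> X -> X) : Prop :=
  forall U a b, open U -> U (f a b) ->
    exists V W, open V /\ open W /\ V a /\ W b /\
                (forall x y, V x -> W y -> U (f x y)).

Definition is_inverse_semigroup {S : Type} (mul : S -> S -> S) (inv : S -> S) : Prop :=
  (forall a b c, mul (mul a b) c = mul a (mul b c)) /\
  (forall a, mul (mul a (inv a)) a = a /\ mul (mul (inv a) a) (inv a) = inv a) /\
  (forall a b, mul (mul a b) a = a -> mul (mul b a) b = b -> b = inv a).

Definition is_hausdorff_top_inv_semigroup {S : Type}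
    (open : (S -> Prop) -> Prop) (mul : S -> S -> S) (inv : S -> S) : Prop :=
  is_topology open /\ hausdorff open /\ is_inverse_semigroup mul inv /\
  continuous2 open mul /\ continuous1 open inv.

(* partial maps of X, as X -> option X (None = undefined) *)
Definition pmap (X : Type) := X -> option X.

Definition pinj {X : Type} (f : pmap X) : Prop :=
  forall x y z, f x = Some z -> f y = Some z -> x = y.

Definition rank_le {X : Type} (n : nat) (f : pmap X) : Prop :=
  exists l : list X, length l <= n /\ forall x y, f x = Some y -> In y l.

(* composition x(fg) = (xf)g, defined on {x in dom f | xf in dom g} *)
Definition pcomp {X : Type} (f g : pmap X) : pmap X :=
  fun x => match f x with Some y => g y | None => None end.

Definition in_In {X : Type} (n : nat) (f : pmap X) : Prop := pinj f /\ rank_le n f.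

(* I_lambda^n with lambda = |X| *)
Definition In_sg (X : Type) (n : nat) := { f : pmap X | in_In n f }.

Lemma in_In_comp {X : Type} (n : nat) (f g : pmap X) :
  in_In n f -> in_In n g -> in_In n (pcomp f g).
Proof.
  intros [If _] [Ig [l [Hl Hr]]]; split.
  - intros x y z Hx Hy; unfold pcomp in *.
    destruct (f x) as [u|] eqn:Ex; [|discriminate].
    destruct (f y) as [v|] eqn:Ey; [|discriminate].
    assert (u = v) by (eapply Ig; eauto). subst v. eapply If; eauto.
  - exists l; split; [exact Hl|].
    intros x y H; unfold pcomp in H. destruct (f x); [eapply Hr; eauto | discriminate].
Qed.

Definition In_mul {X : Type} {n : nat} (a b : In_sg X n) : In_sg X n :=
  exist _ (pcomp (proj1_sig a) (proj1_sig b))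
        (in_In_comp n _ _ (proj2_sig a) (proj2_sig b)).

Definition is_hom {X S : Type} {n : nat} (mul : S -> S -> S) (h : In_sg X n -> S) : Prop :=
  forall a b, h (In_mul a b) = mul (h a) (h b).

From Stdlib Require Import List Lia Classical ClassicalEpsilon
  FunctionalExtensionality ProofIrrelevance PropExtensionality.
Import ListNotations.

(* Let [s] be adherent to the image of [h].  The idempotents [s s^-1] and
   [s^-1 s] are then adherent to the images of partial identities of rank at
   most [n].  Such an idempotent [f] is itself an image: otherwise, since
   [f = f f], it is a limit of products [h e1 * h e2] of images of two partial
   identities that are distinct (Hausdorff separation of [h e1] from [f]), and
   [e1 e2] has smaller rank; induction on the rank ends at rank [-1].  So
   [s s^-1 = h e1] and [s^-1 s = h e2], and [s = h e1 * s * h e2] is adherent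
   to the images of the maps [e1 a e2], which have domain and range in two
   fixed finite sets; a finite set is closed in a Hausdorff space. *)

Section PartialMaps.

Variable X : Type.

Let eq_dec (x y : X) : {x = y} + {x <> y} := excluded_middle_informative (x = y).

Definition pinv (a : pmap X) : pmap X := fun y =>
  match excluded_middle_informative (exists x, a x = Some y) with
  | left H => Some (proj1_sig (constructive_indefinite_description _ H))
  | right _ => None
  end.

Lemma pinv_Some (a : pmap X) : pinj a ->
  forall x y, pinv a y = Some x <-> a x = Some y.
Proof.
  intros Ha x y; unfold pinv.
  destruct (excluded_middle_informative _) as [H|H].
  - destruct (constructive_indefinite_description _ H) as [x' Hx']; simpl.
    split; intros E.
    + injection E as <-; exact Hx'.
    + f_equal; eapply Ha; eauto.
  - split; intros E; [discriminate | exfalso; eauto].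
Qed.

Lemma in_In_pinv (n : nat) (a : pmap X) : in_In n a -> in_In n (pinv a).
Proof.
  intros [Ha [l [Hl Hr]]]; split.
  - intros y1 y2 x E1 E2.
    apply (pinv_Some a Ha) in E1, E2; congruence.
  - exists (map (fun y => match pinv a y with Some x => x | None => y end) l).
    split; [rewrite length_map; exact Hl|].
    intros y x E; apply in_map_iff; exists y; rewrite E; split; [reflexivity|].
    apply (pinv_Some a Ha) in E; eapply Hr; eauto.
Qed.

Lemma pcomp_pinv_l (a : pmap X) : pinj a ->
  forall x, pcomp (pcomp a (pinv a)) a x = a x.
Proof.
  intros Ha x; unfold pcomp.
  destruct (a x) as [y|] eqn:E; [|reflexivity].
  rewrite (proj2 (pinv_Some a Ha x y) E); exact E.
Qed.

Lemma pcomp_pinv_r (a : pmap X) : pinj a ->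
  forall y, pcomp (pcomp (pinv a) a) (pinv a) y = pinv a y.
Proof.
  intros Ha y; unfold pcomp.
  destruct (pinv a y) as [x|] eqn:E; [|reflexivity].
  rewrite (proj1 (pinv_Some a Ha x y) E); exact E.
Qed.

Definition pid (e : pmap X) : Prop := forall x y, e x = Some y -> y = x.

Lemma pid_pcomp_pinv (a : pmap X) : pinj a -> pid (pcomp a (pinv a)).
Proof.
  intros Ha x z; unfold pcomp.
  destruct (a x) as [y|] eqn:E; [|discriminate].
  intros H; apply (pinv_Some a Ha) in H; eapply Ha; eauto.
Qed.

Lemma pid_pinv_pcomp (a : pmap X) : pinj a -> pid (pcomp (pinv a) a).
Proof.
  intros Ha y z; unfold pcomp.
  destruct (pinv a y) as [x|] eqn:E; [|discriminate].
  intros H; apply (pinv_Some a Ha) in E; congruence.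
Qed.

Lemma pid_pcomp (e1 e2 : pmap X) : pid e1 -> pid e2 -> pid (pcomp e1 e2).
Proof.
  intros I1 I2 x y; unfold pcomp.
  destruct (e1 x) as [u|] eqn:E; [|discriminate].
  intros E'; apply I1 in E; apply I2 in E'; congruence.
Qed.

Lemma rank_le_S (k : nat) (f : pmap X) : rank_le k f -> rank_le (S k) f.
Proof. intros [l [Hl Hr]]; exists l; split; [lia | exact Hr]. Qed.

(* The product of two distinct partial identities misses a point fixed by
   one of them, so its range drops an element of that one's range. *)
Lemma rank_le_pcomp_pid_neq (k : nat) (e1 e2 : pmap X) :
  pid e1 -> pid e2 -> rank_le k e1 -> rank_le k e2 -> ~ (forall x, e1 x = e2 x) ->
  exists k', k = S k' /\ rank_le k' (pcomp e1 e2).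
Proof.
  intros I1 I2 [l1 [L1 R1]] [l2 [L2 R2]] Hne.
  destruct (not_all_ex_not _ _ Hne) as [z Hz].
  assert (Hfix : forall x y, pcomp e1 e2 x = Some y ->
                   y = x /\ e1 x = Some x /\ e2 x = Some x).
  { intros x y; unfold pcomp.
    destruct (e1 x) as [u|] eqn:E1; [|discriminate].
    intros E2; pose proof (I1 _ _ E1); subst u; pose proof (I2 _ _ E2); subst y.
    auto. }
  assert (drop : forall l, length l <= k -> In z l ->
            (forall x, e1 x = Some x -> In x l) \/ (forall x, e2 x = Some x -> In x l) ->
            exists k', k = S k' /\ rank_le k' (pcomp e1 e2)).
  { intros l Hl Hzl Hrange.
    pose proof (remove_length_lt eq_dec l z Hzl) as Hlt.
    exists (pred k); split; [lia|].
    exists (remove eq_dec z l); split; [lia|].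
    intros x y E; destruct (Hfix _ _ E) as [-> [E1 E2]].
    apply in_in_remove; [intros ->; apply Hz; congruence|].
    destruct Hrange as [Hr|Hr]; auto. }
  destruct (e1 z) as [y|] eqn:E1.
  - pose proof (I1 _ _ E1); subst y.
    apply (drop l1 L1 (R1 _ _ E1)); left; intros x Ex; exact (R1 _ _ Ex).
  - destruct (e2 z) as [y|] eqn:E2; [|congruence].
    pose proof (I2 _ _ E2); subst y.
    apply (drop l2 L2 (R2 _ _ E2)); right; intros x Ex; exact (R2 _ _ Ex).
Qed.

Definition pmap_upd (g : pmap X) (a b : X) : pmap X :=
  fun y => if eq_dec y a then Some b else g y.

Lemma pmap_graph_finite (l1 l2 : list X) : exists Lp : list (pmap X),
  forall f : pmap X, (forall y z, f y = Some z -> In y l1 /\ In z l2) -> In f Lp.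
Proof.
  induction l1 as [|a l1 IH].
  - exists [fun _ => None]; intros f Hf; left.
    apply functional_extensionality; intros y.
    destruct (f y) eqn:E; [destruct (Hf _ _ E) as [[] _] | reflexivity].
  - destruct IH as [Lp HLp].
    exists (Lp ++ flat_map (fun b => map (fun g => pmap_upd g a b) Lp) l2).
    intros f Hf.
    set (f' := fun y => if eq_dec y a then None else f y).
    assert (Hf' : In f' Lp).
    { apply HLp; intros y z E; unfold f' in E.
      destruct (eq_dec y a) as [|Hya]; [discriminate|].
      destruct (Hf _ _ E) as [[->|Hy] Hz]; [congruence | auto]. }
    apply in_or_app; destruct (f a) as [b|] eqn:Ea.
    + right; apply in_flat_map; exists b; split; [exact (proj2 (Hf _ _ Ea))|].
      apply in_map_iff; exists f'; split; [|exact Hf'].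
      apply functional_extensionality; intros y; unfold pmap_upd, f'.
      destruct (eq_dec y a) as [->|]; auto.
    + left; replace f with f'; [exact Hf'|].
      apply functional_extensionality; intros y; unfold f'.
      destruct (eq_dec y a) as [->|]; auto.
Qed.

Lemma In_sg_ext (n : nat) (a b : In_sg X n) :
  (forall x, proj1_sig a x = proj1_sig b x) -> a = b.
Proof.
  destruct a as [a pa], b as [b pb]; simpl; intros H.
  assert (a = b) by (apply functional_extensionality; exact H); subst.
  f_equal; apply proof_irrelevance.
Qed.

Lemma In_sg_graph_finite (n : nat) (l1 l2 : list X) : exists La : list (In_sg X n),
  forall a, (forall y z, proj1_sig a y = Some z -> In y l1 /\ In z l2) -> In a La.
Proof.
  destruct (pmap_graph_finite l1 l2) as [Lp HLp].
  exists (flat_map (fun g => match excluded_middle_informative (in_In n g) with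
                             | left pf => [exist _ g pf] | right _ => [] end) Lp).
  intros a Ha; apply in_flat_map; exists (proj1_sig a); split; [exact (HLp _ Ha)|].
  destruct (excluded_middle_informative _) as [pf|np].
  - left; apply In_sg_ext; reflexivity.
  - exact (np (proj2_sig a)).
Qed.

Definition In_inv {n : nat} (a : In_sg X n) : In_sg X n :=
  exist _ (pinv (proj1_sig a)) (in_In_pinv n _ (proj2_sig a)).

End PartialMaps.

Arguments pid {X}.

Section Topology.

Variables (T : Type) (open : (T -> Prop) -> Prop).
Hypothesis Htop : is_topology open.

Definition adherent (A : T -> Prop) (x : T) : Prop :=
  forall U, open U -> U x -> exists y, A y /\ U y.

Lemma adherent_mono (A B : T -> Prop) (x : T) :
  (forall y, A y -> B y) -> adherent A x -> adherent B x.
Proof.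
  intros HAB Hx U oU Ux; destruct (Hx U oU Ux) as [y [Ay Uy]]; eauto.
Qed.

Lemma adherent_map (f : T -> T) (A : T -> Prop) (x : T) :
  continuous1 open f -> adherent A x ->
  adherent (fun t => exists y, A y /\ f y = t) (f x).
Proof.
  intros Hf Hx U oU Ufx; destruct (Hx _ (Hf U oU) Ufx) as [y [Ay Uy]]; eauto.
Qed.

Lemma open_of_locally_open (A : T -> Prop) :
  (forall x, A x -> exists O, open O /\ O x /\ forall y, O y -> A y) -> open A.
Proof.
  destruct Htop as [_ [_ Hunion]]; intros Hloc.
  replace A with (fun x => exists U, (open U /\ forall y, U y -> A y) /\ U x).
  - apply Hunion; intros U [oU _]; exact oU.
  - apply functional_extensionality; intros x; apply propositional_extensionality.
    split; [intros [U [[_ HU] Ux]]; auto|].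
    intros Ax; destruct (Hloc x Ax) as [O [oO [Ox HO]]]; eauto.
Qed.

Lemma closed_of_adherent (A : T -> Prop) :
  (forall x, adherent A x -> A x) -> closed_set open A.
Proof.
  intros Hcl; apply open_of_locally_open; intros x Hx.
  apply NNPP; intros Hno; apply Hx, Hcl; intros U oU Ux.
  apply NNPP; intros Hempty; apply Hno.
  exists U; repeat split; auto; intros y Uy Ay; eauto.
Qed.

Lemma adherent_list (L : list T) (x : T) :
  hausdorff open -> adherent (fun t => In t L) x -> In x L.
Proof.
  intros Hhaus; induction L as [|a L IH]; intros Hx.
  - destruct (Hx _ (proj1 Htop) I) as [t [[] _]].
  - destruct (classic (a = x)) as [->|Hax]; [left; reflexivity|right].
    apply IH; intros U oU Ux.
    destruct (Hhaus x a) as [V [W [oV [oW [Vx [Wa D]]]]]]; [congruence|].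
    destruct (Hx (fun y => U y /\ V y)) as [t [[<-|Ht] [Ut Vt]]].
    + apply (proj1 (proj2 Htop)); assumption.
    + split; assumption.
    + destruct (D a Vt Wa).
    + eauto.
Qed.

Lemma continuous1_id : continuous1 open (fun x => x).
Proof. intros U oU; exact oU. Qed.

Lemma continuous1_const (c : T) : continuous1 open (fun _ => c).
Proof.
  intros U oU; apply open_of_locally_open; intros x Uc.
  exists (fun _ => True); split; [exact (proj1 Htop) | auto].
Qed.

Lemma continuous1_mul (mul : T -> T -> T) (f g : T -> T) :
  continuous2 open mul -> continuous1 open f -> continuous1 open g ->
  continuous1 open (fun x => mul (f x) (g x)).
Proof.
  intros Hmul Hf Hg U oU; apply open_of_locally_open; intros x Ux.
  destruct (Hmul U (f x) (g x) oU Ux) as [V [W [oV [oW [Vx [Wx HVW]]]]]].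
  exists (fun y => V (f y) /\ W (g y)); repeat split; auto.
  - apply (proj1 (proj2 Htop)); [apply Hf | apply Hg]; assumption.
  - intros y [Vy Wy]; auto.
Qed.

End Topology.

Arguments adherent {T}.

Section InverseSemigroup.

Variables (M : Type) (mul : M -> M -> M) (inv : M -> M).
Hypothesis Hinv : is_inverse_semigroup mul inv.

Lemma mul_inv_idem (s : M) : mul (mul s (inv s)) (mul s (inv s)) = mul s (inv s).
Proof.
  destruct Hinv as [Hassoc [Hid _]].
  rewrite <- Hassoc, (proj1 (Hid s)); reflexivity.
Qed.

Lemma inv_mul_idem (s : M) : mul (mul (inv s) s) (mul (inv s) s) = mul (inv s) s.
Proof.
  destruct Hinv as [Hassoc [Hid _]].
  rewrite <- Hassoc, (proj2 (Hid s)); reflexivity.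
Qed.

Lemma mul_inv_sandwich (s : M) : mul (mul (mul s (inv s)) s) (mul (inv s) s) = s.
Proof.
  destruct Hinv as [Hassoc [Hid _]].
  rewrite (proj1 (Hid s)), <- Hassoc; exact (proj1 (Hid s)).
Qed.

Lemma hom_In_inv (X : Type) (n : nat) (h : In_sg X n -> M) :
  is_hom mul h -> forall a, h (In_inv X a) = inv (h a).
Proof.
  intros Hh [a [Ha Hr]]; apply (proj2 (proj2 Hinv)); rewrite <- !Hh; f_equal;
    apply In_sg_ext; simpl.
  - exact (pcomp_pinv_l X a Ha).
  - exact (pcomp_pinv_r X a Ha).
Qed.

End InverseSemigroup.

Section ImageClosed.

Variables (X : Type) (n : nat) (M : Type).
Variables (open : (M -> Prop) -> Prop) (mul : M -> M -> M) (inv : M -> M).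
Variable h : In_sg X n -> M.
Hypotheses (Htop : is_topology open) (Hhaus : hausdorff open)
  (Hinv : is_inverse_semigroup mul inv)
  (Hcont : continuous2 open mul) (Hcinv : continuous1 open inv)
  (Hhom : is_hom mul h).

Definition pid_image (k : nat) (t : M) : Prop :=
  exists e : In_sg X n, pid (proj1_sig e) /\ rank_le k (proj1_sig e) /\ h e = t.

Lemma adherent_pid_image_pred (k : nat) (f : M) :
  mul f f = f -> adherent open (pid_image k) f -> ~ pid_image k f ->
  exists k', k = S k' /\ adherent open (pid_image k') f.
Proof.
  intros Hf Had Hnot.
  assert (step : forall U, open U -> U f ->
            exists k', k = S k' /\ exists t, pid_image k' t /\ U t).
  { intros U oU Uf; rewrite <- Hf in Uf.
    destruct (Hcont U f f oU Uf) as [V [W [oV [oW [Vf [Wf HVW]]]]]].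
    destruct (Had V oV Vf) as [t1 [[e1 [I1 [R1 <-]]] V1]].
    destruct (Hhaus (h e1) f) as [U1 [U2 [oU1 [oU2 [U1e [U2f D]]]]]].
    { intros E; apply Hnot; exists e1; auto. }
    destruct (Had (fun x => W x /\ U2 x)) as [t2 [[e2 [I2 [R2 <-]]] [W2 U2e]]].
    { apply (proj1 (proj2 Htop)); assumption. }
    { split; assumption. }
    destruct (rank_le_pcomp_pid_neq X k _ _ I1 I2 R1 R2) as [k' [Hk Rk]].
    { intros Heq; apply (In_sg_ext X n) in Heq; subst e2; exact (D _ U1e U2e). }
    exists k'; split; [exact Hk|].
    exists (h (In_mul e1 e2)); split.
    - exists (In_mul e1 e2); split; [apply pid_pcomp; assumption|]; auto.
    - rewrite Hhom; auto. }
  destruct (step _ (proj1 Htop) I) as [k' [Hk _]].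
  exists k'; split; [exact Hk|].
  intros U oU Uf; destruct (step U oU Uf) as [k'' [Hk' Ht]].
  rewrite Hk in Hk'; injection Hk' as <-; exact Ht.
Qed.

Lemma idempotent_pid_image (k : nat) (f : M) :
  mul f f = f -> adherent open (pid_image k) f -> pid_image k f.
Proof.
  revert f; induction k as [|k IH]; intros f Hf Had; apply NNPP; intros Hnot;
    destruct (adherent_pid_image_pred _ f Hf Had Hnot) as [k' [Hk Had']].
  - discriminate.
  - injection Hk as <-; apply Hnot.
    destruct (IH f Hf Had') as [e [I [R E]]].
    exists e; split; [|split]; auto using rank_le_S.
Qed.

Lemma adherent_mul_inv_pid_image (s : M) :
  adherent open (fun t => exists a, h a = t) s ->
  pid_image n (mul s (inv s)) /\ pid_image n (mul (inv s) s).
Proof.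
  intros Hs; split; apply idempotent_pid_image;
    auto using mul_inv_idem, inv_mul_idem.
  - eapply adherent_mono;
      [|apply (adherent_map _ _ (fun x => mul x (inv x))); [|exact Hs]].
    + intros t [y [[a <-] <-]].
      exists (In_mul a (In_inv X a)); split; [|split].
      * exact (pid_pcomp_pinv X _ (proj1 (proj2_sig a))).
      * exact (proj2 (proj2_sig (In_mul a (In_inv X a)))).
      * rewrite Hhom, (hom_In_inv M mul inv Hinv X n h Hhom); reflexivity.
    + apply continuous1_mul; auto using continuous1_id.
  - eapply adherent_mono;
      [|apply (adherent_map _ _ (fun x => mul (inv x) x)); [|exact Hs]].
    + intros t [y [[a <-] <-]].
      exists (In_mul (In_inv X a) a); split; [|split].
      * exact (pid_pinv_pcomp X _ (proj1 (proj2_sig a))).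
      * exact (proj2 (proj2_sig (In_mul (In_inv X a) a))).
      * rewrite Hhom, (hom_In_inv M mul inv Hinv X n h Hhom); reflexivity.
    + apply continuous1_mul; auto using continuous1_id.
Qed.

Lemma adherent_hom_image (s : M) :
  adherent open (fun t => exists a, h a = t) s -> exists a, h a = s.
Proof.
  intros Hs.
  destruct (adherent_mul_inv_pid_image s Hs) as
    [[e1 [I1 [[l1 [_ R1]] E1]]] [e2 [I2 [[l2 [_ R2]] E2]]]].
  destruct (In_sg_graph_finite X n l1 l2) as [La HLa].
  assert (Hin : In s (map h La)).
  { apply (adherent_list _ open Htop); [exact Hhaus|].
    rewrite <- (mul_inv_sandwich M mul inv Hinv s), <- E1, <- E2.
    eapply adherent_mono;
      [|apply (adherent_map _ _ (fun x => mul (mul (h e1) x) (h e2))); [|exact Hs]].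
    - intros t [y [[a <-] <-]]; rewrite <- !Hhom; apply in_map, HLa.
      intros y z; simpl; unfold pcomp.
      destruct (proj1_sig e1 y) as [u|] eqn:Eu; [|discriminate].
      pose proof (I1 _ _ Eu); subst u.
      destruct (proj1_sig a y) as [w|]; [|discriminate].
      intros Ez; split; [eapply R1 | eapply R2]; eauto.
    - apply continuous1_mul; auto using continuous1_const.
      apply continuous1_mul; auto using continuous1_const, continuous1_id. }
  apply in_map_iff in Hin; destruct Hin as [a [Ha _]]; eauto.
Qed.

End ImageClosed.

Theorem theorem1 (X : Type) (HX : inhabited X) (n : nat) (Hn : 0 < n)
  (S : Type) (open : (S -> Prop) -> Prop) (mul : S -> S -> S) (inv : S -> S)
  (HS : is_hausdorff_top_inv_semigroup open mul inv)
  (h : In_sg X n -> S) (Hh : is_hom mul h) :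
  closed_set open (fun s => exists a, h a = s).
Proof.
  destruct HS as [Htop [Hhaus [Hinv [Hcont Hcinv]]]].
  apply closed_of_adherent; [exact Htop|].
  exact (adherent_hom_image X n S open mul inv h Htop Hhaus Hinv Hcont Hcinv Hh).
Qed.
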